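(* Let $x>0$ and $0\le p\le 1$. Then $$W_p(x,1)\le p(1-p)\left(\sqrt{x}-1\right)^2+L(x,1)\le A(x,1).$$ Equivalently (by homogeneity), for all $x,y>0$ and $0\le p\le 1$: $W_p(x,y)\le p(1-p)(\sqrt{x}-\sqrt{y})^2+L(x,y)\le A(x,y)$.
   Context: For $x,y>0$: $A(x,y)=\frac{x+y}{2}$; $L(x,y)=\frac{x-y}{\log x-\log y}$ for $x\ne y$ and $L(x,x)=x$ (logarithmic mean). The Wigner--Yanase--Dyson function is $W_p(x,y)=\frac{p(1-p)(x-y)^2}{(x^p-y^p)(x^{1-p}-y^{1-p})}$ for $x\neq y$, $p\notin\{0,1\}$, with $W_p(x,x)=x$, and for $p\in\{0,1\}$ defined by its limiting value $W_0(x,y)=W_1(x,y)=L(x,y)$. *)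

From Stdlib Require Import Reals.
Open Scope R_scope.

Definition A_mean (x y : R) : R := (x + y) / 2.

Definition L_mean (x y : R) : R :=
  if Req_EM_T x y then x else (x - y) / (ln x - ln y).

Definition W_fun (p x y : R) : R :=
  if Req_EM_T p 0 then L_mean x y
  else if Req_EM_T p 1 then L_mean x y
  else if Req_EM_T x y then x
  else p * (1 - p) * (x - y) ^ 2 /
       ((Rpower x p - Rpower y p) * (Rpower x (1 - p) - Rpower y (1 - p))).

From Stdlib Require Import Reals Lra Psatz.
From Coquelicot Require Import Coquelicot.
Open Scope R_scope.

(* Writing x = m e^(2a), y = m e^(-2a) and b = (2p-1)a, so that p(1-p) = (a^2-b^2)/(4a^2),
   every quantity becomes m times a hyperbolic expression:
   (sqrt x - sqrt y)^2 = 4 m sinh^2 a, L(x,y) = m sinh a cosh a / a, A(x,y) = m (cosh^2 a + sinh^2 a)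
   and (x^p - y^p)(x^(1-p) - y^(1-p)) = 4 m (sinh^2 a - sinh^2 b).
   The right inequality then reduces to sinh a <= a cosh a for a >= 0, and the left one to
     (a^2 - b^2) sinh^2 a cosh^2 b <= a sinh a cosh a (sinh^2 a - sinh^2 b)   for |b| <= |a|,
   which holds with equality at b = a and whose gap is nonincreasing in b on [0, a]
   because t cosh t / sinh t is nondecreasing on (0, oo). *)

Lemma nondecreasing_of_derive (f f' : R -> R) (a b : R) :
  a <= b ->
  (forall t, a <= t <= b -> is_derive f t (f' t)) ->
  (forall t, a < t < b -> 0 <= f' t) ->
  f a <= f b.
Proof.
  intros Hab Hd Hpos.
  destruct (Req_dec a b) as [<- | Hne]; [lra |].
  destruct (MVT_cor2 f f' a b) as [c [Hc Hcab]]; [lra | |].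
  - intros c Hc; apply is_derive_Reals, Hd, Hc.
  - assert (0 <= f' c * (b - a)) by (apply Rmult_le_pos; [apply Hpos, Hcab | lra]).
    lra.
Qed.

Lemma cosh_sq (t : R) : cosh t ^ 2 = 1 + sinh t ^ 2.
Proof.
  unfold cosh, sinh; rewrite exp_Ropp.
  pose proof (exp_pos t); field; lra.
Qed.

Lemma cosh_pos (t : R) : 0 < cosh t.
Proof. unfold cosh; pose proof (exp_pos t); pose proof (exp_pos (- t)); lra. Qed.

Lemma sinh_pos (t : R) : 0 < t -> 0 < sinh t.
Proof. intros Ht; rewrite <- sinh_0; apply sinh_lt, Ht. Qed.

Lemma sinh_nonneg (t : R) : 0 <= t -> 0 <= sinh t.
Proof.
  intros [Ht | <-]; [apply Rlt_le, sinh_pos, Ht | rewrite sinh_0; lra].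
Qed.

Lemma sinh_opp (t : R) : sinh (- t) = - sinh t.
Proof. unfold sinh; rewrite Ropp_involutive; field. Qed.

Lemma cosh_opp (t : R) : cosh (- t) = cosh t.
Proof. unfold cosh; rewrite Ropp_involutive; field. Qed.

Lemma cosh_abs (t : R) : cosh (Rabs t) = cosh t.
Proof.
  destruct (Rcase_abs t); [rewrite Rabs_left, cosh_opp | rewrite Rabs_right]; auto.
Qed.

Lemma sinh_sq_abs (t : R) : sinh (Rabs t) ^ 2 = sinh t ^ 2.
Proof.
  destruct (Rcase_abs t); [rewrite Rabs_left, sinh_opp by lra; ring |].
  rewrite Rabs_right; auto.
Qed.

Lemma mul_sinh_abs (t : R) : Rabs t * sinh (Rabs t) = t * sinh t.
Proof.
  destruct (Rcase_abs t); [rewrite Rabs_left, sinh_opp by lra; ring |].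
  rewrite Rabs_right; auto.
Qed.

Lemma le_sinh_mul_cosh (t : R) : 0 <= t -> t <= sinh t * cosh t.
Proof.
  intros Ht.
  apply (nondecreasing_of_derive (fun s => sinh s * cosh s - s)
           (fun s => 2 * sinh s ^ 2) 0 t) in Ht.
  - rewrite sinh_0 in Ht; lra.
  - intros s _; unfold sinh, cosh; auto_derive; auto.
    rewrite exp_Ropp; pose proof (exp_pos s); field; lra.
  - intros s _; nra.
Qed.

Lemma sinh_le_mul_cosh (t : R) : 0 <= t -> sinh t <= t * cosh t.
Proof.
  intros Ht.
  apply (nondecreasing_of_derive (fun s => s * cosh s - sinh s)
           (fun s => s * sinh s) 0 t) in Ht.
  - rewrite sinh_0 in Ht; lra.
  - intros s _; unfold sinh, cosh; auto_derive; auto; field.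
  - intros s Hs; pose proof (sinh_pos s ltac:(lra)); nra.
Qed.

Lemma mul_sinh_cosh_le (t : R) : t * sinh t * cosh t <= t ^ 2 * cosh t ^ 2.
Proof.
  pose proof (sinh_le_mul_cosh (Rabs t) (Rabs_pos t)) as Hle.
  assert (Hc : 0 <= Rabs t * cosh (Rabs t)).
  { apply Rmult_le_pos; [apply Rabs_pos | apply Rlt_le, cosh_pos]. }
  apply (Rmult_le_compat_l _ _ _ Hc) in Hle.
  rewrite cosh_abs in Hle.
  replace (Rabs t * cosh t * sinh (Rabs t)) with (Rabs t * sinh (Rabs t) * cosh t)
    in Hle by ring.
  rewrite mul_sinh_abs in Hle.
  replace (Rabs t * cosh t * (Rabs t * cosh t)) with (Rabs t ^ 2 * cosh t ^ 2)
    in Hle by ring.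
  rewrite pow2_abs in Hle; exact Hle.
Qed.

Lemma mul_coth_le (s t : R) : 0 < s <= t ->
  s * cosh s / sinh s <= t * cosh t / sinh t.
Proof.
  intros [Hs Hst].
  apply (nondecreasing_of_derive (fun u => u * cosh u / sinh u)
           (fun u => (sinh u * cosh u - u) / sinh u ^ 2) s t Hst).
  - intros u Hu; pose proof (sinh_pos u ltac:(lra)) as Hsu.
    unfold sinh, cosh in *; auto_derive; [intro; lra |].
    rewrite exp_Ropp in *; pose proof (exp_pos u) as He.
    assert (Hsq : 0 < exp u * ((exp u - / exp u) / 2)) by (apply Rmult_lt_0_compat; lra).
    replace (exp u * ((exp u - / exp u) / 2)) with ((exp u * exp u - 1) / 2) in Hsq
      by (field; lra).
    field; lra.
  - intros u Hu; pose proof (sinh_pos u ltac:(lra)).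
    pose proof (le_sinh_mul_cosh u ltac:(lra)).
    apply Rdiv_le_0_compat; nra.
Qed.

Lemma sinh_sq_gap_le (a b : R) : 0 <= b <= a ->
  (a ^ 2 - b ^ 2) * sinh a * cosh b ^ 2 <= a * cosh a * (sinh a ^ 2 - sinh b ^ 2).
Proof.
  intros [Hb Hba].
  cut ((a ^ 2 - b ^ 2) * sinh a * cosh b ^ 2 - a * cosh a * (sinh a ^ 2 - sinh b ^ 2)
       <= (a ^ 2 - a ^ 2) * sinh a * cosh a ^ 2 - a * cosh a * (sinh a ^ 2 - sinh a ^ 2));
    [lra |].
  apply (nondecreasing_of_derive
           (fun t => (a ^ 2 - t ^ 2) * sinh a * cosh t ^ 2 - a * cosh a * (sinh a ^ 2 - sinh t ^ 2))
           (fun t => 2 * cosh t *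
                     ((a * cosh a * sinh t - t * sinh a * cosh t) + (a ^ 2 - t ^ 2) * sinh a * sinh t))
           b a Hba).
  - intros t _; unfold sinh, cosh; auto_derive; auto; field.
  - intros t Ht.
    pose proof (sinh_pos t ltac:(lra)); pose proof (sinh_pos a ltac:(lra)).
    pose proof (cosh_pos t).
    assert (Hcoth : t * cosh t * sinh a <= a * cosh a * sinh t).
    { pose proof (mul_coth_le t a ltac:(lra)) as Hm.
      apply (Rmult_le_compat_r (sinh t * sinh a)) in Hm; [| nra].
      replace (t * cosh t / sinh t * (sinh t * sinh a)) with (t * cosh t * sinh a) in Hm
        by (field; lra).
      replace (a * cosh a / sinh a * (sinh t * sinh a)) with (a * cosh a * sinh t) in Hm
        by (field; lra).
      exact Hm. }
    assert (0 <= (a ^ 2 - t ^ 2) * sinh a * sinh t).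
    { apply Rmult_le_pos; [apply Rmult_le_pos |]; nra. }
    apply Rmult_le_pos; nra.
Qed.

Lemma sinh_sq_gap_le_abs (a b : R) : Rabs b <= Rabs a ->
  (a ^ 2 - b ^ 2) * sinh a ^ 2 * cosh b ^ 2 <= a * sinh a * cosh a * (sinh a ^ 2 - sinh b ^ 2).
Proof.
  intros Hba.
  pose proof (sinh_sq_gap_le (Rabs a) (Rabs b) (conj (Rabs_pos b) Hba)) as Hgap.
  pose proof (sinh_nonneg (Rabs a) (Rabs_pos a)) as Hsa.
  apply (Rmult_le_compat_l _ _ _ Hsa) in Hgap.
  rewrite !cosh_abs, !sinh_sq_abs, !pow2_abs in Hgap.
  replace (sinh (Rabs a) * ((a ^ 2 - b ^ 2) * sinh (Rabs a) * cosh b ^ 2))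
    with ((a ^ 2 - b ^ 2) * sinh (Rabs a) ^ 2 * cosh b ^ 2) in Hgap by ring.
  replace (sinh (Rabs a) * (Rabs a * cosh a * (sinh a ^ 2 - sinh b ^ 2)))
    with (Rabs a * sinh (Rabs a) * cosh a * (sinh a ^ 2 - sinh b ^ 2)) in Hgap by ring.
  rewrite sinh_sq_abs, mul_sinh_abs in Hgap; exact Hgap.
Qed.

Lemma sinh_sq_lt (a b : R) : Rabs b < Rabs a -> sinh b ^ 2 < sinh a ^ 2.
Proof.
  intros Hba.
  rewrite <- (sinh_sq_abs a), <- (sinh_sq_abs b).
  pose proof (sinh_nonneg (Rabs b) (Rabs_pos b)).
  pose proof (sinh_lt _ _ Hba); nra.
Qed.

Lemma mul_exp_sq (m t : R) : 0 < m -> m * exp t ^ 2 = exp (ln m + 2 * t).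
Proof.
  intros Hm; rewrite exp_plus, exp_ln by exact Hm.
  simpl; rewrite Rmult_1_r, <- exp_plus; f_equal; f_equal; ring.
Qed.

Lemma exp_param_exists (x y : R) : 0 < x -> 0 < y ->
  exists m a, 0 < m /\ x = m * exp a ^ 2 /\ y = m * exp (- a) ^ 2.
Proof.
  intros Hx Hy.
  exists (exp ((ln x + ln y) / 2)), ((ln x - ln y) / 4).
  split; [apply exp_pos |].
  rewrite !mul_exp_sq, ln_exp by apply exp_pos.
  split; rewrite <- exp_ln at 1 by assumption; f_equal; field.
Qed.

Section ExpParam.

Variables m a : R.
Hypothesis Hm : 0 < m.

Let x := m * exp a ^ 2.
Let y := m * exp (- a) ^ 2.

Lemma sqrt_sub_sqrt_param : (sqrt x - sqrt y) ^ 2 = 4 * m * sinh a ^ 2.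
Proof.
  unfold x, y; rewrite !sqrt_mult, !sqrt_pow2 by (pose proof (exp_pos a);
    pose proof (exp_pos (- a)); nra).
  replace ((sqrt m * exp a - sqrt m * exp (- a)) ^ 2)
    with (sqrt m ^ 2 * (exp a - exp (- a)) ^ 2) by ring.
  rewrite pow2_sqrt by lra; unfold sinh; field.
Qed.

Lemma sub_param : x - y = 4 * m * (sinh a * cosh a).
Proof. unfold x, y, sinh, cosh; field. Qed.

Lemma add_param : x + y = 2 * m * (cosh a ^ 2 + sinh a ^ 2).
Proof. unfold x, y, sinh, cosh; field. Qed.

Lemma ln_sub_param : ln x - ln y = 4 * a.
Proof. unfold x, y; rewrite !mul_exp_sq, !ln_exp by exact Hm; ring. Qed.

Lemma wyd_denom_param (p : R) :
  (Rpower x p - Rpower y p) * (Rpower x (1 - p) - Rpower y (1 - p))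
  = 4 * m * (sinh a ^ 2 - sinh ((2 * p - 1) * a) ^ 2).
Proof.
  replace ((Rpower x p - Rpower y p) * (Rpower x (1 - p) - Rpower y (1 - p)))
    with (Rpower x (p + (1 - p)) + Rpower y (p + (1 - p))
          - (Rpower x p * Rpower y (1 - p) + Rpower y p * Rpower x (1 - p)))
    by (rewrite !Rpower_plus; ring).
  assert (Hcross : forall u v, Rpower (m * exp u ^ 2) p * Rpower (m * exp v ^ 2) (1 - p)
                               = m * exp (p * u + (1 - p) * v) ^ 2).
  { intros u v; unfold Rpower; rewrite !mul_exp_sq, !ln_exp by exact Hm.
    rewrite <- exp_plus; f_equal; ring. }
  replace (p + (1 - p)) with 1 by ring.
  unfold x, y; rewrite !Rpower_1, !Hcross by (apply Rmult_lt_0_compat; [lra | apply pow2_gt_0;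
    apply Rgt_not_eq, exp_pos]).
  replace (p * a + (1 - p) * - a) with ((2 * p - 1) * a) by ring.
  replace (p * - a + (1 - p) * a) with (- ((2 * p - 1) * a)) by ring.
  unfold sinh; rewrite !exp_Ropp.
  pose proof (exp_pos a); pose proof (exp_pos ((2 * p - 1) * a)).
  field; lra.
Qed.

End ExpParam.

Lemma exp_param_neq (m a : R) :
  m * exp a ^ 2 <> m * exp (- a) ^ 2 -> a <> 0.
Proof. intros Hxy ->; apply Hxy; rewrite Ropp_0; reflexivity. Qed.

Lemma logmean_le_mean (x y p : R) : 0 < x -> 0 < y -> x <> y -> 0 <= p <= 1 ->
  p * (1 - p) * (sqrt x - sqrt y) ^ 2 + (x - y) / (ln x - ln y) <= (x + y) / 2.
Proof.
  intros Hx Hy Hxy Hp.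
  destruct (exp_param_exists x y Hx Hy) as (m & a & Hm & -> & ->).
  pose proof (exp_param_neq m a Hxy) as Ha.
  rewrite sqrt_sub_sqrt_param, sub_param, ln_sub_param, add_param by exact Hm.
  assert (Hl : sinh a * cosh a / a <= cosh a ^ 2).
  { replace (sinh a * cosh a / a) with (a * sinh a * cosh a / a ^ 2) by (field; exact Ha).
    apply Rle_div_l; [apply pow2_gt_0, Ha |].
    pose proof (mul_sinh_cosh_le a); lra. }
  replace (4 * m * (sinh a * cosh a) / (4 * a)) with (m * (sinh a * cosh a / a))
    by (field; exact Ha).
  assert (0 <= m * ((1 - 4 * (p * (1 - p))) * sinh a ^ 2)).
  { apply Rmult_le_pos; [lra | apply Rmult_le_pos; [pose proof (pow2_ge_0 (2 * p - 1)); lra | apply pow2_ge_0]]. }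
  assert (0 <= m * (cosh a ^ 2 - sinh a * cosh a / a)) by (apply Rmult_le_pos; lra).
  nra.
Qed.

Lemma wyd_le_logmean (x y p : R) : 0 < x -> 0 < y -> x <> y -> 0 < p < 1 ->
  p * (1 - p) * (x - y) ^ 2 / ((Rpower x p - Rpower y p) * (Rpower x (1 - p) - Rpower y (1 - p)))
  <= p * (1 - p) * (sqrt x - sqrt y) ^ 2 + (x - y) / (ln x - ln y).
Proof.
  intros Hx Hy Hxy Hp.
  destruct (exp_param_exists x y Hx Hy) as (m & a & Hm & -> & ->).
  pose proof (exp_param_neq m a Hxy) as Ha.
  rewrite wyd_denom_param, sqrt_sub_sqrt_param, sub_param, ln_sub_param by exact Hm.
  remember ((2 * p - 1) * a) as b eqn:Eb.
  assert (Hpb : p * (1 - p) = (a ^ 2 - b ^ 2) / (4 * a ^ 2)) by (subst b; field; exact Ha).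
  assert (Hba : Rabs b < Rabs a).
  { subst b; rewrite Rabs_mult.
    assert (Rabs (2 * p - 1) < 1) by (apply Rabs_def1; lra).
    pose proof (Rabs_pos_lt a Ha); nra. }
  pose proof (sinh_sq_lt a b Hba) as HD.
  pose proof (sinh_sq_gap_le_abs a b (Rlt_le _ _ Hba)) as Hgap.
  pose proof (cosh_sq a) as Hc; pose proof (cosh_sq b) as Hcb.
  rewrite Hpb.
  set (s := sinh a) in *; set (c := cosh a) in *; set (sb := sinh b) in *; set (cb := cosh b) in *.
  match goal with |- ?L <= ?R =>
    assert (Hdiff : R - L = m / (a ^ 2 * (s ^ 2 - sb ^ 2))
                            * (a * s * c * (s ^ 2 - sb ^ 2) - (a ^ 2 - b ^ 2) * s ^ 2 * cb ^ 2)) end.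
  { transitivity (m / (a ^ 2 * (s ^ 2 - sb ^ 2))
        * ((a ^ 2 - b ^ 2) * s ^ 2 * (s ^ 2 - sb ^ 2) + a * s * c * (s ^ 2 - sb ^ 2)
           - (a ^ 2 - b ^ 2) * s ^ 2 * c ^ 2)).
    - field; split; [lra | split; [exact Ha | lra]].
    - rewrite Hc, Hcb; ring. }
  assert (0 <= m / (a ^ 2 * (s ^ 2 - sb ^ 2))).
  { apply Rlt_le, Rdiv_lt_0_compat; [lra |].
    apply Rmult_lt_0_compat; [apply pow2_gt_0, Ha | lra]. }
  assert (0 <= m / (a ^ 2 * (s ^ 2 - sb ^ 2))
               * (a * s * c * (s ^ 2 - sb ^ 2) - (a ^ 2 - b ^ 2) * s ^ 2 * cb ^ 2))
    by (apply Rmult_le_pos; lra).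
  lra.
Qed.

Theorem theorem2p1 :
  forall x y p : R, 0 < x -> 0 < y -> 0 <= p <= 1 ->
    W_fun p x y <= p * (1 - p) * (sqrt x - sqrt y) ^ 2 + L_mean x y /\
    p * (1 - p) * (sqrt x - sqrt y) ^ 2 + L_mean x y <= A_mean x y.
Proof.
  intros x y p Hx Hy Hp.
  destruct (Req_dec x y) as [<- | Hxy].
  - unfold W_fun, L_mean, A_mean.
    destruct (Req_EM_T x x) as [_ | Hne]; [| contradiction].
    replace (sqrt x - sqrt x) with 0 by ring.
    destruct (Req_EM_T p 0); [| destruct (Req_EM_T p 1)]; lra.
  - assert (Hw : 0 <= p * (1 - p) * (sqrt x - sqrt y) ^ 2)
      by (apply Rmult_le_pos; [nra | apply pow2_ge_0]).
    unfold W_fun, L_mean, A_mean.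
    destruct (Req_EM_T x y) as [| _]; [contradiction |].
    split; [| apply logmean_le_mean; assumption].
    destruct (Req_EM_T p 0); [lra |].
    destruct (Req_EM_T p 1); [lra |].
    apply wyd_le_logmean; [assumption .. | lra].
Qed.
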